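(* Consider DODA in the setting of the context. Assume the maximum delay is bounded by $\tau$, that the feedback associated with time step $t$ is the whole vector field $V_t=\nabla f_t$ (which can be evaluated at any point immediately, without delay), and that each $V_t$ is $L$-Lipschitz continuous. Take guesses $\tilde g_{t+1/2}=\tilde V_t(x_t)$, where $\tilde V_t=V_s$ for some $s\in\mathcal S_t$, and learning rates satisfying $\eta_{t+1}\le\eta_t$, $(2\tau+1)\eta_t\le\gamma_t$ and $2\gamma_t^2L^2\le1$ for all $t$. Then for every $p\in\mathcal V$ the regret evaluated at $x_{3/2},\dots,x_{T+1/2}$ satisfies \[R_T(p)\le\frac{\|p-x_1\|^2}{2\eta_T}+\sum_{t=1}^T\gamma_t\|V_t(x_t)-\tilde V_t(x_t)\|^2.\]
   Context: Unconstrained Euclidean setting: $\mathcal V$ finite-dimensional Euclidean space; losses $f_t:\mathcal V\to\mathbb R$ convex and differentiable. At each round $t=1,\dots,T$ one agent is active. $\mathcal S_t\subset\{1,\dots,t-1\}$ is the set of timestamps $s$ whose feedback is available to the active agent at time $t$ (nondecreasing in time for each agent). DODA: given $x_1\in\mathcal V$, $x_t=x_1-\eta_t\sum_{s\in\mathcal S_t}g_{s+1/2}$ and $x_{t+1/2}=x_t-\gamma_t\tilde g_{t+1/2}$; the agent plays $x_{t+1/2}$ and $g_{t+1/2}=V_t(x_{t+1/2})$. Regret: $R_T(p)=\sum_{t=1}^Tf_t(x_{t+1/2})-\sum_{t=1}^Tf_t(p)$. Maximum delay bounded by $\tau$: $\{1,\dots,t-\tau-1\}\subset\mathcal S_t$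 for all $t$. *)

From HB Require Import structures.
From mathcomp Require Import all_boot all_order all_algebra.
From mathcomp Require Import all_classical all_reals all_analysis.
Set Implicit Arguments. Unset Strict Implicit. Unset Printing Implicit Defensive.
Import Order.TTheory GRing.Theory Num.Theory.
Import numFieldNormedType.Exports.
Local Open Scope ring_scope.

Definition dotp {R : realType} {n : nat} (u v : 'rV[R]_n) : R := (u *m v^T) 0 0.
Definition enorm {R : realType} {n : nat} (u : 'rV[R]_n) : R := Num.sqrt (dotp u u).

Definition convexf {R : realType} {n : nat} (f : 'rV[R]_n -> R) : Prop :=
  forall (x y : 'rV[R]_n) (a : R), 0 <= a <= 1 ->
    f (a *: x + (1 - a) *: y) <= a * f x + (1 - a) * f y.

Definition has_gradient {R : realType} {n : nat}
  (f : 'rV[R]_n -> R) (g : 'rV[R]_n -> 'rV[R]_n) : Prop :=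
  forall x : 'rV[R]_n, differentiable f x /\
    forall v : 'rV[R]_n, 'D_v f x = dotp (g x) v.

Definition lipschitz_vf {R : realType} {n : nat} (L : R)
  (g : 'rV[R]_n -> 'rV[R]_n) : Prop :=
  0 <= L /\ forall x y : 'rV[R]_n, enorm (g x - g y) <= L * enorm (x - y).

From HB Require Import structures.
From mathcomp Require Import all_boot all_order all_algebra.
From mathcomp Require Import all_classical all_reals all_analysis.
From mathcomp Require Import ring lra zify.
Import Order.TTheory GRing.Theory Num.Theory.
Import numFieldNormedType.Exports.
Local Open Scope ring_scope.

(* Write g_t = V_t(x_{t+1/2}) and Z_t = sum_{s<t} g_s.  By convexity the regret is at
   most sum_t <g_t, x_{t+1/2} - p>, and x_{t+1/2} - p splits into three parts.
   - The undelayed dual-averaging step x_1 - p - eta_t Z_t: telescoping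
     ||Z_{t+1}||^2 = ||Z_t||^2 + 2 <g_t, Z_t> + ||g_t||^2 with eta nonincreasing, plus
     Young's inequality, bounds its contribution by
     ||p - x_1||^2 / (2 eta_T) + sum_t eta_t ||g_t||^2 / 2.
   - The missing feedback eta_t sum_{s<t, s notin S_t} g_s: only rounds s in [t - tau, t)
     can be missing, so Young's inequality and double counting cost at most
     tau sum_t eta_t ||g_t||^2.
   - The optimistic step -gamma_t c_t with c_t = tilde V_t(x_t): since V_t is L-Lipschitz
     and 2 gamma_t^2 L^2 <= 1, it costs gamma_t ||V_t(x_t) - c_t||^2 - gamma_t ||g_t||^2 / 2.
   As (2 tau + 1) eta_t <= gamma_t, the last negative term absorbs the quadratic terms of
   the first two. *)

Section InnerProduct.
Context {R : realType} {n : nat}.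
Implicit Types u v w : 'rV[R]_n.

Lemma dotpE u v : dotp u v = \sum_i u 0 i * v 0 i.
Proof. by rewrite /dotp mxE; apply: eq_bigr => i _; rewrite mxE. Qed.

Lemma dotpC u v : dotp u v = dotp v u.
Proof. by rewrite /dotp -[v in RHS]trmxK -trmx_mul [RHS]mxE. Qed.

Lemma dotpDl u v w : dotp (u + v) w = dotp u w + dotp v w.
Proof. by rewrite /dotp mulmxDl mxE. Qed.

Lemma dotpZl a u v : dotp (a *: u) v = a * dotp u v.
Proof. by rewrite /dotp -scalemxAl mxE. Qed.

Lemma dotpNl u v : dotp (- u) v = - dotp u v.
Proof. by rewrite -scaleN1r dotpZl mulN1r. Qed.

Lemma dotpDr u v w : dotp u (v + w) = dotp u v + dotp u w.
Proof. by rewrite !(dotpC u) dotpDl. Qed.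

Lemma dotpZr a u v : dotp u (a *: v) = a * dotp u v.
Proof. by rewrite !(dotpC u) dotpZl. Qed.

Lemma dotpNr u v : dotp u (- v) = - dotp u v.
Proof. by rewrite !(dotpC u) dotpNl. Qed.

Lemma dotpBr u v w : dotp u (v - w) = dotp u v - dotp u w.
Proof. by rewrite dotpDr dotpNr. Qed.

Lemma dotp0r u : dotp u 0 = 0.
Proof. by rewrite /dotp trmx0 mulmx0 mxE. Qed.

Lemma dotp_sumr I (r : seq I) (P : pred I) (F : I -> 'rV[R]_n) u :
  dotp u (\sum_(i <- r | P i) F i) = \sum_(i <- r | P i) dotp u (F i).
Proof. by elim/big_rec2: _ => [|i y1 y2 _ <-]; rewrite ?dotp0r ?dotpDr. Qed.

Lemma dotp_suml I (r : seq I) (P : pred I) (F : I -> 'rV[R]_n) u :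
  dotp (\sum_(i <- r | P i) F i) u = \sum_(i <- r | P i) dotp (F i) u.
Proof. by rewrite dotpC dotp_sumr; apply: eq_bigr => i _; rewrite dotpC. Qed.

Lemma dotpp_ge0 u : 0 <= dotp u u.
Proof. by rewrite dotpE sumr_ge0 // => i _; rewrite -expr2 sqr_ge0. Qed.

Lemma sqr_enorm u : enorm u ^+ 2 = dotp u u.
Proof. by rewrite sqr_sqrtr // dotpp_ge0. Qed.

Lemma dotppD u v : dotp (u + v) (u + v) = dotp u u + 2 * dotp u v + dotp v v.
Proof. by rewrite !(dotpDl, dotpDr) (dotpC v u); ring. Qed.

Lemma dotppN u : dotp (- u) (- u) = dotp u u.
Proof. by rewrite dotpNl dotpNr opprK. Qed.

Lemma dotppB u v : dotp (u - v) (u - v) = dotp u u - 2 * dotp u v + dotp v v.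
Proof. by rewrite dotppD dotppN dotpNr; ring. Qed.

Lemma dotppZ a u : dotp (a *: u) (a *: u) = a ^+ 2 * dotp u u.
Proof. by rewrite dotpZl dotpZr mulrA -expr2. Qed.

Lemma dotp_le_sqr u v : 2 * dotp u v <= dotp u u + dotp v v.
Proof. by have := dotpp_ge0 (u - v); rewrite dotppB; lra. Qed.

Lemma dotpp_leD u v : dotp (u + v) (u + v) <= 2 * dotp u u + 2 * dotp v v.
Proof. by have := dotp_le_sqr u v; rewrite dotppD; lra. Qed.

Lemma dotp_young a u v : 0 < a ->
  dotp u v <= a / 2 * dotp u u + dotp v v / (2 * a).
Proof.
move=> a_gt0; have a_neq0 := lt0r_neq0 a_gt0.
have := dotp_le_sqr (a *: u) v; rewrite dotpZl dotppZ => h.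
have -> : dotp u v = 2 * (a * dotp u v) / (2 * a) by field.
have -> : a / 2 * dotp u u + dotp v v / (2 * a)
          = (a ^+ 2 * dotp u u + dotp v v) / (2 * a) by field.
by rewrite ler_pM2r // invr_gt0 mulr_gt0.
Qed.

End InnerProduct.

Section Convexity.
Context {R : realType} {n : nat}.

Lemma convex_gradient_ineq (f : 'rV[R]_n -> R) (g : 'rV[R]_n -> 'rV[R]_n) x p :
  convexf f -> has_gradient f g -> f x - f p <= dotp (g x) (x - p).
Proof.
move=> f_cvx f_grad; have [f_diff Df] := f_grad x.
have f_der : derivable f x (p - x) := diff_derivable f_diff.
have quotient_le h : 0 < h < 1 ->
    h^-1 *: ((f \o shift x) (h *: (p - x)) - f x) <= f p - f x.
  move=> /andP[h_gt0 h_lt1]; rewrite /= /shift.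
  have -> : h *: (p - x) + x = h *: p + (1 - h) *: x.
    by rewrite scalerBr scalerBl scale1r -addrA [- _ + x]addrC.
  have := f_cvx p x h; rewrite (ltW h_gt0) (ltW h_lt1) => /(_ isT) f_le.
  rewrite -[leRHS](mulKf (lt0r_neq0 h_gt0)) /GRing.scale /=.
  by rewrite ler_pM2l ?invr_gt0 //; lra.
have : 'D_(p - x) f x <= f p - f x.
  rewrite /derive (cvg_at_rightE _ _ f_der); apply: limr_le.
    (* the one-sided quotient converges since the punctured two-sided one does *)
    apply/cvg_ex; exists (derive f x (p - x)).
    move=> A /f_der /nbhs_ballP [_ /posnumP[e] xe_A].
    by exists e%:num => //= y xe_y /gt_eqF/negbT/xe_A; exact.
  near=> h; apply: quotient_le; apply/andP; split.
  - by near: h; exact: nbhs_right_gt.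
  - by near: h; exact: nbhs_right_lt.
by rewrite Df -[x - p]opprB dotpNr; lra.
Unshelve. all: by end_near.
Qed.

End Convexity.

Section WindowSums.
Context {R : numDomainType}.

Lemma ler_sum_subpred I (r : seq I) (P Q : pred I) (F : I -> R) :
  (forall i, P i -> Q i) -> (forall i, Q i -> 0 <= F i) ->
  \sum_(i <- r | P i) F i <= \sum_(i <- r | Q i) F i.
Proof.
move=> PQ F_ge0; rewrite [leRHS](bigID P) /=.
have -> : \sum_(i <- r | Q i && P i) F i = \sum_(i <- r | P i) F i.
  by apply: eq_bigl => i; exact: andb_idl (@PQ i).
by rewrite lerDl sumr_ge0 // => i /andP[/F_ge0].
Qed.

Lemma sum_window_le (P : pred nat) (m k lo w : nat) (c : R) :
  0 <= c -> (forall i, (m <= i < k)%N -> P i -> (lo <= i < lo + w)%N) ->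
  \sum_(m <= i < k | P i) c <= w%:R * c.
Proof.
move=> c_ge0 Pw; rewrite big_const_seq iter_addr_0 mulr_natl.
apply: ler_wpMn2l => //; rewrite -size_filter -[leqRHS](size_iota lo w).
rewrite uniq_leq_size ?filter_uniq ?iota_uniq // => i.
by rewrite mem_filter mem_index_iota mem_iota => /andP[Pi /Pw]; apply.
Qed.

Lemma window_pairs_sum_le (a : nat -> R) (tau T : nat) :
  (forall t, (1 <= t)%N -> 0 <= a t) ->
  \sum_(1 <= t < T.+1) \sum_(1 <= s < t | (t <= s + tau)%N) (a t + a s)
  <= 2 * tau%:R * \sum_(1 <= t < T.+1) a t.
Proof.
move=> a_ge0.
have later_le t : (1 <= t)%N ->
    \sum_(1 <= s < t | (t <= s + tau)%N) a t <= tau%:R * a t.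
  move=> t_ge1; apply: (sum_window_le _ _ _ (t - tau)) => [|s]; first exact: a_ge0.
  by move=> /andP[_ st] ts; apply/andP; split; lia.
have earlier_le s : (1 <= s)%N ->
    \sum_(1 <= t < T.+1 | (s < t <= s + tau)%N) a s <= tau%:R * a s.
  move=> s_ge1; apply: (sum_window_le _ _ _ s.+1) => [|t]; first exact: a_ge0.
  by move=> _ /andP[st ts]; apply/andP; split; lia.
have swap : \sum_(1 <= t < T.+1) \sum_(1 <= s < t | (t <= s + tau)%N) a s
    = \sum_(1 <= s < T.+1) \sum_(1 <= t < T.+1 | (s < t <= s + tau)%N) a s.
  transitivity (\sum_(1 <= t < T.+1)
                 \sum_(1 <= s < T.+1 | ((t <= s + tau) && (s < t))%N) a s).
    rewrite big_nat [RHS]big_nat; apply: eq_bigr => t /andP[_ tT].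
    exact: big_nat_widen (ltnW tT).
  rewrite (exchange_big_dep_nat xpredT) //; apply: eq_bigr => s _.
  by apply: congr_big => // t; rewrite /= andbC.
have -> : \sum_(1 <= t < T.+1) \sum_(1 <= s < t | (t <= s + tau)%N) (a t + a s)
    = \sum_(1 <= t < T.+1) \sum_(1 <= s < t | (t <= s + tau)%N) a t
      + \sum_(1 <= t < T.+1) \sum_(1 <= s < t | (t <= s + tau)%N) a s.
  by rewrite -big_split; apply: eq_bigr => t _; rewrite big_split.
rewrite swap; apply: le_trans (lerD (ler_sum_nat _) (ler_sum_nat _)) _.
- by move=> t /andP[t_ge1 _]; exact: later_le.
- by move=> s /andP[s_ge1 _]; exact: earlier_le.
by rewrite -!mulr_sumr -mulrA (mulr_natl _ 2) mulr2n lexx.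
Qed.
End WindowSums.

Section NonincreasingSteps.
Context {R : realType} {n : nat}.
Variables (eta : nat -> R) (g : nat -> 'rV[R]_n).
Hypothesis eta_gt0 : forall t, (1 <= t)%N -> 0 < eta t.
Hypothesis eta_nonincr : forall t, (1 <= t)%N -> eta t.+1 <= eta t.

Lemma eta_le s t : (1 <= s <= t)%N -> eta t <= eta s.
Proof.
move=> /andP[s_ge1 st]; have t_ge1 := leq_trans s_ge1 st.
apply: (homo_leq_in (D := [pred i | 0 < i]%N) (r := fun a b => b <= a)) st => //.
- by move=> y a b ya yb; exact: le_trans yb ya.
- by move=> i j i_gt0 _ k /andP[ik _]; exact: ltn_trans ik.
- by move=> i /= i_gt0 _; exact: eta_nonincr.
Qed.

Lemma sqnorm_prefix_sum_le T :
  eta T / 2 * dotp (\sum_(1 <= s < T.+1) g s) (\sum_(1 <= s < T.+1) g s)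
  <= \sum_(1 <= t < T.+1)
       eta t * (dotp (g t) (\sum_(1 <= s < t) g s) + dotp (g t) (g t) / 2).
Proof.
elim: T => [|T IH]; first by rewrite !big_geq // dotp0r mulr0.
rewrite big_nat_recr // [leRHS]big_nat_recr //=.
set Z := \sum_(1 <= s < T.+1) g s in IH *.
have eta_Z : eta T.+1 * dotp Z Z <= eta T * dotp Z Z.
  case: T @Z IH => [|T] Z _; first by rewrite /Z big_geq // dotp0r !mulr0.
  by rewrite ler_wpM2r ?dotpp_ge0 ?eta_nonincr.
rewrite dotppD (dotpC Z); lra.
Qed.

Lemma dual_averaging_regret_le x1 p T : (1 <= T)%N ->
  \sum_(1 <= t < T.+1)
     (dotp (g t) (x1 - p) - eta t * dotp (g t) (\sum_(1 <= s < t) g s))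
  <= dotp (p - x1) (p - x1) / (2 * eta T)
     + \sum_(1 <= t < T.+1) eta t / 2 * dotp (g t) (g t).
Proof.
move=> T_ge1.
have young := dotp_young (eta T) (\sum_(1 <= s < T.+1) g s) (x1 - p) (eta_gt0 T T_ge1).
have prefix := sqnorm_prefix_sum_le T.
rewrite (eq_bigr (fun t => eta t * dotp (g t) (\sum_(1 <= s < t) g s)
                           + eta t / 2 * dotp (g t) (g t))) in prefix; last first.
  by move=> t _; ring.
have -> : dotp (p - x1) (p - x1) = dotp (x1 - p) (x1 - p) by rewrite -dotppN opprB.
rewrite big_split /= in prefix; rewrite sumrB -dotp_suml; lra.
Qed.

Lemma delayed_feedback_le (S : nat -> nat -> bool) (tau T : nat) :
  (forall t s, (1 <= s)%N -> (s + tau < t)%N -> S t s) ->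
  \sum_(1 <= t < T.+1) eta t * dotp (g t) (\sum_(1 <= s < t | ~~ S t s) g s)
  <= tau%:R * \sum_(1 <= t < T.+1) eta t * dotp (g t) (g t).
Proof.
move=> S_window.
pose a t := eta t * dotp (g t) (g t).
have a_ge0 t : (1 <= t)%N -> 0 <= a t.
  by move=> t_ge1; rewrite mulr_ge0 ?dotpp_ge0 // ltW ?eta_gt0.
have pair_le t s : (1 <= s < t)%N -> 2 * (eta t * dotp (g t) (g s)) <= a t + a s.
  move=> /andP[s_ge1 st]; have eta_t_ge0 := ltW (eta_gt0 t (leq_trans s_ge1 (ltnW st))).
  have := ler_wpM2l eta_t_ge0 (dotp_le_sqr (g t) (g s)).
  have : eta t * dotp (g s) (g s) <= a s.
    by rewrite ler_wpM2r ?dotpp_ge0 // eta_le // s_ge1 ltnW.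
  rewrite /a; lra.
have row_le t : (1 <= t)%N ->
    2 * (eta t * dotp (g t) (\sum_(1 <= s < t | ~~ S t s) g s))
    <= \sum_(1 <= s < t | (t <= s + tau)%N) (a t + a s).
  move=> t_ge1; rewrite dotp_sumr !mulr_sumr big_nat_cond [leRHS]big_nat_cond.
  apply: (@le_trans _ _
    (\sum_(1 <= s < t | (1 <= s < t)%N && ~~ S t s) (a t + a s))).
    by apply: ler_sum => s /andP[s_range _]; exact: pair_le.
  apply: ler_sum_subpred => s.
    case/andP=> /andP[s_ge1 st] /=; rewrite s_ge1 st /=.
    by apply: contraNT; rewrite -ltnNge; exact: S_window.
  by case/andP=> /andP[s_ge1 _] _; rewrite addr_ge0 ?a_ge0.
change (\sum_(1 <= t < T.+1) eta t * dotp (g t) (\sum_(1 <= s < t | ~~ S t s) g s)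
        <= tau%:R * \sum_(1 <= t < T.+1) a t).
have rows_le : 2 * \sum_(1 <= t < T.+1)
                       eta t * dotp (g t) (\sum_(1 <= s < t | ~~ S t s) g s)
    <= \sum_(1 <= t < T.+1) \sum_(1 <= s < t | (t <= s + tau)%N) (a t + a s).
  rewrite mulr_sumr big_nat [leRHS]big_nat.
  by apply: ler_sum => t /andP[t_ge1 _]; exact: row_le.
have := window_pairs_sum_le a tau T a_ge0; lra.
Qed.

End NonincreasingSteps.

Section OptimisticStep.
Context {R : realType} {n : nat}.
Implicit Types (x c p G : 'rV[R]_n) (F : 'rV[R]_n -> 'rV[R]_n).

Lemma extragradient_step_le F L x c gam :
  lipschitz_vf L F -> 0 <= gam -> 2 * gam ^+ 2 * L ^+ 2 <= 1 ->
  gam / 2 * dotp (F (x - gam *: c)) (F (x - gam *: c))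
    - gam * dotp (F (x - gam *: c)) c
  <= gam * dotp (F x - c) (F x - c).
Proof.
move=> [L_ge0 F_lip] gam_ge0 step_small.
set y := F (x - gam *: c).
have lip_sq : dotp (y - F x) (y - F x) <= L ^+ 2 * (gam ^+ 2 * dotp c c).
  have -> : L ^+ 2 * (gam ^+ 2 * dotp c c) = (L * enorm (- (gam *: c))) ^+ 2.
    by rewrite exprMn sqr_enorm dotppN dotppZ.
  rewrite -sqr_enorm ler_sqr ?nnegrE ?mulr_ge0 ?sqrtr_ge0 //.
  by have := F_lip (x - gam *: c) x; rewrite addrAC subrr add0r.
have small_c : L ^+ 2 * (gam ^+ 2 * dotp c c) <= dotp c c / 2.
  have := ler_wpM2r (dotpp_ge0 c) step_small; rewrite mul1r; lra.
have y_sub_c : dotp (y - c) (y - c)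
    <= 2 * dotp (F x - c) (F x - c) + 2 * dotp (y - F x) (y - F x).
  have -> : y - c = (F x - c) + (y - F x) by rewrite [RHS]addrC addrA subrK.
  exact: dotpp_leD.
have : dotp y y / 2 - dotp y c <= dotp (F x - c) (F x - c).
  by move: y_sub_c; rewrite dotppB; lra.
move=> /(ler_wpM2l gam_ge0); lra.
Qed.

Lemma optimistic_step_le p c (f : 'rV[R]_n -> R) F L eta gam (x1 : 'rV[R]_n) G x :
  convexf f -> has_gradient f F -> lipschitz_vf L F ->
  0 <= gam -> 2 * gam ^+ 2 * L ^+ 2 <= 1 -> x = x1 - eta *: G ->
  f (x - gam *: c) - f p
  <= dotp (F (x - gam *: c)) (x1 - p) - eta * dotp (F (x - gam *: c)) G
     + gam * dotp (F x - c) (F x - c)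
     - gam / 2 * dotp (F (x - gam *: c)) (F (x - gam *: c)).
Proof.
move=> f_cvx f_grad F_lip gam_ge0 step_small x_def.
have := extragradient_step_le F L x c gam F_lip gam_ge0 step_small.
have := convex_gradient_ineq f F (x - gam *: c) p f_cvx f_grad.
set y := F (x - gam *: c).
rewrite [in X in dotp y X]x_def !dotpBr !dotpZr; lra.
Qed.

End OptimisticStep.
Arguments optimistic_step_le {R n} p c {f F L eta gam x1 G x}.

Lemma doda_regret_le (R : realType) (n : nat)
  (f : nat -> 'rV[R]_n -> R) (V : nat -> 'rV[R]_n -> 'rV[R]_n) (L : R)
  (S : nat -> nat -> bool) (tau : nat) (eta gamma : nat -> R)
  (x xh c : nat -> 'rV[R]_n) (x1 p : 'rV[R]_n) (T : nat) :
  (forall t, convexf (f t)) ->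
  (forall t, has_gradient (f t) (V t)) ->
  (forall t, lipschitz_vf L (V t)) ->
  (forall t s, (1 <= s)%N -> (s + tau < t)%N -> S t s) ->
  (forall t, (1 <= t)%N -> 0 < eta t) ->
  (forall t, (1 <= t)%N -> eta t.+1 <= eta t) ->
  (forall t, (1 <= t)%N -> (2 * tau + 1)%:R * eta t <= gamma t) ->
  (forall t, (1 <= t)%N -> 2 * gamma t ^+ 2 * L ^+ 2 <= 1) ->
  (forall t, (1 <= t)%N ->
     x t = x1 - eta t *: \sum_(1 <= s < t | S t s) V s (xh s)) ->
  (forall t, (1 <= t)%N -> xh t = x t - gamma t *: c t) ->
  (1 <= T)%N ->
  \sum_(1 <= t < T.+1) (f t (xh t) - f t p)
    <= dotp (p - x1) (p - x1) / (2 * eta T)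
       + \sum_(1 <= t < T.+1) gamma t * dotp (V t (x t) - c t) (V t (x t) - c t).
Proof.
move=> f_cvx f_grad V_lip S_window eta_gt0 eta_nonincr gamma_ge step_small
  x_def xh_def T_ge1.
pose g s := V s (xh s).
have gamma_ge0 t : (1 <= t)%N -> 0 <= gamma t.
  by move=> t_ge1; apply: le_trans (gamma_ge t t_ge1); rewrite mulr_ge0 // ltW ?eta_gt0.
have round_le t : (1 <= t < T.+1)%N ->
    f t (xh t) - f t p
    <= dotp (g t) (x1 - p) - eta t * dotp (g t) (\sum_(1 <= s < t) g s)
       + eta t * dotp (g t) (\sum_(1 <= s < t | ~~ S t s) g s)
       + (gamma t * dotp (V t (x t) - c t) (V t (x t) - c t)
          - gamma t / 2 * dotp (g t) (g t)).
  move=> /andP[t_ge1 _]; rewrite /g (xh_def t t_ge1) (bigID (S t)) /=.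
  have := optimistic_step_le p (c t) (f_cvx t) (f_grad t) (V_lip t)
    (gamma_ge0 t t_ge1) (step_small t t_ge1) (x_def t t_ge1).
  rewrite !dotpDr; lra.
have absorb : \sum_(1 <= t < T.+1) eta t / 2 * dotp (g t) (g t)
    + tau%:R * \sum_(1 <= t < T.+1) eta t * dotp (g t) (g t)
    <= \sum_(1 <= t < T.+1) gamma t / 2 * dotp (g t) (g t).
  rewrite mulr_sumr -big_split /=; apply: ler_sum_nat => t /andP[t_ge1 _].
  have := ler_wpM2r (dotpp_ge0 (g t)) (gamma_ge t t_ge1).
  rewrite natrD natrM; lra.
apply: le_trans (ler_sum_nat round_le) _.
rewrite big_split big_split /= [X in _ + X <= _]sumrB.
have := dual_averaging_regret_le eta g eta_gt0 eta_nonincr x1 p T T_ge1.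
have := delayed_feedback_le eta g eta_gt0 eta_nonincr S tau T S_window.
lra.
Qed.

Theorem theorem7 (R : realType) (n : nat)
  (* losses f_t and their gradients V_t, t = 1, 2, ... *)
  (f : nat -> 'rV[R]_n -> R) (V : nat -> 'rV[R]_n -> 'rV[R]_n) (L : R)
  (* agents: agent t is the agent active at round t *)
  (A : Type) (agent : nat -> A)
  (* S t s  <->  s \in S_t *)
  (S : nat -> nat -> bool) (tau : nat)
  (* guess index: sigma t = Some s means tilde V_t = V_s; None means tilde V_t = 0 *)
  (sigma : nat -> option nat)
  (eta gamma : nat -> R)
  (x : nat -> 'rV[R]_n) (xh : nat -> 'rV[R]_n) (x1 : 'rV[R]_n)
  (T : nat) (p : 'rV[R]_n) :
  (forall t, convexf (f t)) ->
  (forall t, has_gradient (f t) (V t)) ->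
  (forall t, lipschitz_vf L (V t)) ->
  (forall t s, S t s -> (1 <= s < t)%N) ->
  (forall t t', (1 <= t <= t')%N -> agent t = agent t' ->
     forall s, S t s -> S t' s) ->
  (forall t s, (1 <= s)%N -> (s + tau < t)%N -> S t s) ->
  (forall t, (1 <= t)%N ->
     match sigma t with
     | Some s => is_true (S t s)
     | None => forall s, ~~ S t s
     end) ->
  (forall t, (1 <= t)%N -> 0 < eta t) ->
  (forall t, (1 <= t)%N -> eta t.+1 <= eta t) ->
  (forall t, (1 <= t)%N -> (2 * tau + 1)%:R * eta t <= gamma t) ->
  (forall t, (1 <= t)%N -> 2 * gamma t ^+ 2 * L ^+ 2 <= 1) ->
  (* DODA iterates *)
  (forall t, (1 <= t)%N ->
     x t = x1 - eta t *: \sum_(1 <= s < t | S t s) V s (xh s)) ->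
  (forall t, (1 <= t)%N ->
     xh t = x t - gamma t *: (match sigma t with
                              | Some s => V s (x t)
                              | None => 0
                              end)) ->
  (1 <= T)%N ->
  \sum_(1 <= t < T.+1) (f t (xh t) - f t p)
    <= dotp (p - x1) (p - x1) / (2 * eta T)
       + \sum_(1 <= t < T.+1)
           gamma t * dotp (V t (x t) - (match sigma t with
                                        | Some s => V s (x t)
                                        | None => 0
                                        end))
                          (V t (x t) - (match sigma t with
                                        | Some s => V s (x t)
                                        | None => 0
                                        end)).
Proof.
(* The bound holds for any guess vectors c_t. *)
move=> f_cvx f_grad V_lip _ _ S_window _.
exact: doda_regret_le.
Qed.
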